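(* (Working in $\mathbf{ZF}$.) Let $X$ be a weakly normal generalized topological space such that $X_{top}$ is locally compact and not compact, and let $\hat X$ be the Alexandroff strict compactification of $X$. Then the operator $\mathrm{Ex}_{\hat X}$ is finitely additive if and only if, for every pair $A,B$ of disjoint members of $\mathrm{Cl}_X$, at least one of the sets $A,B$ is topologically compact.
   Context: A generalized topological space (gts) $(X,\mathrm{Op}_X,\mathrm{Cov}_X)$ is in the sense of Delfs–Knebusch ($\mathrm{Op}_X$ contains $\emptyset,X$ and is closed under finite unions and intersections; $\mathrm{Cov}_X$ a collection of families of open sets satisfying the Delfs–Knebusch axioms). $\mathrm{Cl}_X$ = complements of open sets; $X_{top}$ = $X$ with topology generated by $\mathrm{Op}_X$; a subset is topologically compact if it is compact as a subspace of $X_{top}$. $X$ is weakly normal if any two disjoint sets, each a singleton or in $\mathrm{Cl}_X$, lie in disjoint open sets. $\mathrm{Kc}_X$ is the set of topologically compact members of $\mathrm{Cl}_X$. For $\infty\notin X$, the Alexandroff strict compactification is $\hat X=X\cup\{\infty\}$ with $\mathrm{Op}_{\hat X}=\mathrm{Op}_X\cup\{\hat X\setminus C:C\in\mathrm{Kc}_X\}$ and $\mathrm{Cov}_{\hat X}=\{\mathcal U\subseteq\mathrm{Op}_{\hat X}:\{U\cap X:U\in\mathcal U\}\in\mathrm{Cov}_X\}$; $\hat X_{top}$ is $\hat X$ with the topology generated by $\mathrm{Op}_{\hat X}$, a compactification of $X_{top}$. For $U\in\mathrm{Op}_X$, $\mathrm{Ex}_{\hat X}(U)=\hat X\setminus\mathrm{cl}_{\hat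 X_{top}}(X\setminus U)$; $\mathrm{Ex}_{\hat X}$ is finitely additive if $\{\mathrm{Ex}_{\hat X}(U):U\in\mathrm{Op}_X\}$ is stable under finite unions. *)

From mathcomp Require Import all_boot.
From mathcomp Require Import boolp classical_sets cardinality.

Set Implicit Arguments.
Unset Strict Implicit.
Unset Printing Implicit Defensive.

Local Open Scope classical_set_scope.

Section GTS.
Variable X : Type.

(** Delfs--Knebusch axioms (in the set-theoretic form used by Piekosz):
    Op_X contains set0, setT and is closed under binary unions/intersections;
    Cov_X is a family of families of open sets (a member U is an admissible
    covering of its union \bigcup U, which must be open) such that
    (1) finite families of open sets are admissible,
    (2) admissible coverings restrict to open subsets,
    (3) admissible coverings of the members of an admissible covering compose,
    (4) a family of open sets with the same union that is refined by an
        admissible covering is admissible. *)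
Definition is_gts (Op : set (set X)) (Cov : set (set (set X))) : Prop :=
  [/\ Op set0, Op setT,
      (forall U V, Op U -> Op V -> Op (U `|` V)),
      (forall U V, Op U -> Op V -> Op (U `&` V)) &
  [/\ (forall UU, Cov UU -> UU `<=` Op /\ Op (\bigcup_(U in UU) U)),
      (forall UU, UU `<=` Op -> finite_set UU -> Cov UU),
      (forall UU V, Cov UU -> Op V -> Cov [set U `&` V | U in UU]),
      (forall UU (VV : set X -> set (set X)), Cov UU ->
         (forall U, UU U -> Cov (VV U) /\ \bigcup_(W in VV U) W = U) ->
         Cov (\bigcup_(U in UU) VV U)) &
      (forall UU VV, Cov UU -> VV `<=` Op ->
         \bigcup_(V in VV) V = \bigcup_(U in UU) U ->
         (forall U, UU U -> exists2 V, VV V & U `<=` V) -> Cov VV)]].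

Definition gts_closed (Op : set (set X)) (C : set X) : Prop := Op (~` C).

End GTS.

Definition is_topology (T : Type) (F : set (set T)) : Prop :=
  [/\ F setT,
      (forall U V, F U -> F V -> F (U `&` V)) &
      (forall G : set (set T), G `<=` F -> F (\bigcup_(U in G) U))].

Definition gen_open (T : Type) (B : set (set T)) (W : set T) : Prop :=
  forall F : set (set T), is_topology F -> B `<=` F -> F W.

Definition top_compact (T : Type) (B : set (set T)) (A : set T) : Prop :=
  forall G : set (set T), G `<=` gen_open B -> A `<=` \bigcup_(U in G) U ->
    exists2 H : set (set T), finite_set H /\ H `<=` G & A `<=` \bigcup_(U in H) U.

Definition top_closure (T : Type) (B : set (set T)) (A : set T) : set T :=
  [set y | forall W, gen_open B W -> W y -> W `&` A !=set0].

Definition locally_compact (T : Type) (B : set (set T)) : Prop :=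
  forall x : T, exists2 K : set T, top_compact B K &
    exists2 U : set T, gen_open B U & U x /\ U `<=` K.

Definition singleton_or_closed (X : Type) (Op : set (set X)) (A : set X) :=
  (exists x, A = [set x]) \/ gts_closed Op A.

Definition weakly_normal (X : Type) (Op : set (set X)) : Prop :=
  forall A B : set X, singleton_or_closed Op A -> singleton_or_closed Op B ->
    A `&` B = set0 ->
    exists U V, [/\ Op U, Op V, A `<=` U, B `<=` V & U `&` V = set0].

Definition Kc (X : Type) (Op : set (set X)) (C : set X) : Prop :=
  gts_closed Op C /\ top_compact Op C.

(** The Alexandroff strict compactification: hat X = option X, with
    None playing the role of the point at infinity. *)
Definition hat_Op (X : Type) (Op : set (set X)) : set (set (option X)) :=
  [set W | (exists2 U, Op U & W = Some @` U) \/
           (exists2 C, Kc Op C & W = ~` (Some @` C))].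

Definition hat_Cov (X : Type) (Op : set (set X)) (Cov : set (set (set X)))
  : set (set (set (option X))) :=
  [set UU | UU `<=` hat_Op Op /\ Cov [set Some @^-1` U | U in UU]].

Definition Ex (X : Type) (Op : set (set X)) (U : set X) : set (option X) :=
  ~` top_closure (hat_Op Op) (Some @` (~` U)).

(** Ex_{hat X} is finitely additive: { Ex U | U in Op_X } is stable under
    (binary, hence finite nonempty) unions. *)
Definition Ex_finitely_additive (X : Type) (Op : set (set X)) : Prop :=
  forall U V, Op U -> Op V -> exists2 W, Op W & Ex Op U `|` Ex Op V = Ex Op W.

From mathcomp Require Import all_boot.
From mathcomp Require Import boolp classical_sets cardinality.
Local Open Scope classical_set_scope.

(** A finite point [x] lies in [Ex U] iff [x] lies in [U], and the point at
    infinity lies in [Ex U] iff [X \ U] is contained in some member of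
    [Kc_X].  Hence [Ex U ∪ Ex V = Ex W] forces [W = U ∪ V], and finite
    additivity amounts to: if [X \ (U ∪ V)] lies in a compact closed set, so
    does [X \ U] or [X \ V].  For disjoint closed [A], [B] take [U = X \ A],
    [V = X \ B]; then [U ∪ V = X], so [A] or [B] lies in a compact closed set
    and is therefore compact.  Conversely, enclose a compact closed
    [C ⊇ X \ (U ∪ V)] in an open [O] inside a compact closed [K] (weak
    normality plus local compactness); the closed sets [(X \ U) \ O] and
    [(X \ V) \ O] are disjoint, so one of them, say the first, is compact,
    and [X \ U] lies in the compact closed set [((X \ U) \ O) ∪ K]. *)

Lemma bigcup_finite_closed {T : Type} {P : set (set T)} :
  P set0 -> (forall A B, P A -> P B -> P (A `|` B)) ->
  forall {H : set (set T)}, finite_set H -> H `<=` P -> P (\bigcup_(U in H) U).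
Proof.
move=> P0 PU H /(@finite_seqP {classic (set T)}) [s ->].
elim: s => [|a s IH] HP.
  by have -> : \bigcup_(U in [set` ([::] : seq {classic (set T)})]) U = set0
    by apply/seteqP; split => x //= [U].
have -> : \bigcup_(U in [set` (a :: s : seq {classic (set T)})]) U =
   a `|` \bigcup_(U in [set` (s : seq {classic (set T)})]) U.
  apply/seteqP; split => x /=.
    move=> [U]; rewrite /= in_cons => /orP [/eqP -> | Us] Ux; first by left.
    by right; exists U.
  case=> [ax|[U Us Ux]]; first by exists a => //=; rewrite in_cons eqxx.
  by exists U => //=; rewrite in_cons Us orbT.
apply: PU; first by apply: HP; rewrite /= in_cons eqxx.
by apply: IH => U Us; apply: HP; rewrite /= in_cons Us orbT.
Qed.

Section GeneratedTopology.
Variables (T : Type) (B : set (set T)).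

Lemma gen_open_sub U : B U -> gen_open B U.
Proof. by move=> BU F _; apply. Qed.

Lemma gen_open_basis : B setT -> (forall U V, B U -> B V -> B (U `&` V)) ->
  forall W x, gen_open B W -> W x -> exists O, [/\ B O, O x & O `<=` W].
Proof.
move=> BT BI W x gW; move: x.
apply: (gW [set W | forall x, W x -> exists O, [/\ B O, O x & O `<=` W]]).
- split.
  + by move=> x _; exists setT.
  + move=> U V hU hV x [Ux Vx].
    have [O1 [B1 O1x O1U]] := hU x Ux; have [O2 [B2 O2x O2V]] := hV x Vx.
    exists (O1 `&` O2); split => //; first exact: BI.
    by move=> y [? ?]; split; [apply: O1U | apply: O2V].
  + move=> G GF x [U GU Ux]; have [O [BO Ox OU]] := GF U GU x Ux.
    by exists O; split => // y Oy; exists U => //; apply: OU.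
- by move=> U BU x Ux; exists U; split.
Qed.

Lemma top_compact0 : top_compact B set0.
Proof. by move=> G _ _; exists set0 => //; split. Qed.

Lemma top_compactU K1 K2 :
  top_compact B K1 -> top_compact B K2 -> top_compact B (K1 `|` K2).
Proof.
move=> c1 c2 G GB cov.
have [H1 [f1 s1] cv1] := c1 G GB (fun x Kx => cov x (or_introl Kx)).
have [H2 [f2 s2] cv2] := c2 G GB (fun x Kx => cov x (or_intror Kx)).
exists (H1 `|` H2); first by split; [rewrite finite_setU | move=> U [/s1|/s2]].
move=> x [/cv1 [U HU Ux]|/cv2 [U HU Ux]]; exists U => //; [by left|by right].
Qed.

Lemma top_compact_closed_sub K D :
  top_compact B K -> D `<=` K -> gen_open B (~` D) -> top_compact B D.
Proof.
move=> cK DK gD G GB cov.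
have GDB : G `|` [set ~` D] `<=` gen_open B by move=> U [/GB // | ->].
have covK : K `<=` \bigcup_(U in G `|` [set ~` D]) U.
  move=> x _; have [Dx|nDx] := pselect (D x).
    by have [U GU Ux] := cov x Dx; exists U => //; left.
  by exists (~` D) => //; right.
have [H [fH sH] cvH] := cK _ GDB covK.
exists (H `&` G); first by split; [exact: finite_setIl | move=> U []].
move=> x Dx; have [U HU Ux] := cvH x (DK x Dx).
by case: (sH U HU) => [GU|UD]; [exists U | move: Ux; rewrite UD].
Qed.

End GeneratedTopology.

Arguments gen_open_sub {T B U}.
Arguments gen_open_basis {T B} _ _ {W x}.
Arguments top_compact_closed_sub {T B K D}.

Section AlexandroffCompactification.
Variables (X : Type) (Op : set (set X)).
Hypotheses (Op0 : Op set0) (OpT : Op setT)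
  (OpU : forall U V, Op U -> Op V -> Op (U `|` V))
  (OpI : forall U V, Op U -> Op V -> Op (U `&` V)).

Lemma Kc0 : Kc Op set0.
Proof. by split; [rewrite /gts_closed setC0 | exact: top_compact0]. Qed.

Lemma KcU C1 C2 : Kc Op C1 -> Kc Op C2 -> Kc Op (C1 `|` C2).
Proof.
move=> [h1 k1] [h2 k2]; split; last exact: top_compactU.
by rewrite /gts_closed setCU; apply: OpI.
Qed.

Lemma Kc_closed_sub {C D : set X} :
  Kc Op C -> gts_closed Op D -> D `<=` C -> Kc Op D.
Proof.
move=> [_ cC] cD DC; split => //.
by apply: top_compact_closed_sub cC DC _; apply: gen_open_sub.
Qed.

Lemma Ex_Some {U : set X} {x : X} : Op U -> Ex Op U (Some x) <-> U x.
Proof.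
move=> OU; split.
  move=> hE; have [//|nUx] := pselect (U x); exfalso; apply: hE => W _ Wx.
  by exists (Some x); split => //; exists x.
move=> Ux hcl.
have [_ [[u Uu <-] [v nv [vu]]]] := hcl (Some @` U)
  (gen_open_sub (or_introl (ex_intro2 _ _ U OU erefl))) (ex_intro2 _ _ x Ux erefl).
by subst v.
Qed.

(* The basic neighbourhoods of infinity are closed under [`&`], so induction
   on the generated topology applies. *)
Lemma hat_open_None {W : set (option X)} : gen_open (hat_Op Op) W -> W None ->
  exists2 C, Kc Op C & ~` (Some @` C) `<=` W.
Proof.
move=> gW; apply: (gW [set W | W None ->
  exists2 C, Kc Op C & ~` (Some @` C) `<=` W]).
- split.
  + by move=> _; exists set0 => //; exact: Kc0.
  + move=> A B hA hB [AN BN].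
    have [C1 K1 s1] := hA AN; have [C2 K2 s2] := hB BN.
    exists (C1 `|` C2); first exact: KcU.
    move=> z nz; split; [apply: s1 | apply: s2] => -[c Cc e]; apply: nz;
      exists c => //; [by left | by right].
  + move=> G GF [A GA AN]; have [C KC s] := GF A GA AN.
    by exists C => // z /s Az; exists A.
- by move=> A [[V OV ->] [] | [C KC ->] _]; last exists C.
Qed.

Lemma Ex_None U : Ex Op U None <-> exists2 C, Kc Op C & ~` U `<=` C.
Proof.
split; last first.
  move=> [C KC UC] hcl.
  have [z [Wz [u nu zu]]] := hcl (~` (Some @` C))
    (gen_open_sub (or_intror (ex_intro2 _ _ C KC erefl))) (ltac:(by move=> [])).
  by subst z; apply: Wz; exists u => //; apply: UC.
move=> /existsNP [W /not_implyP [gW /not_implyP [WN hW]]].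
have [C KC CW] := hat_open_None gW WN.
exists C => // u nu; have [//|nCu] := pselect (C u); exfalso.
apply: hW; exists (Some u); split; last by exists u.
by apply: CW => -[c Cc [e]]; subst c.
Qed.

Lemma Ex_setU_sub U V : Op U -> Op V ->
  Ex Op U `|` Ex Op V `<=` Ex Op (U `|` V).
Proof.
move=> OU OV; have OUV := OpU _ _ OU OV.
move=> [x|] /=.
  by case=> [/(Ex_Some OU) | /(Ex_Some OV)] h; apply/(Ex_Some OUV);
    [left | right].
by case=> /Ex_None [C KC s]; apply/Ex_None; exists C => // y;
  rewrite setCU => -[nUy nVy]; apply: s.
Qed.

Lemma Ex_finitely_additive_setU : Ex_finitely_additive Op ->
  forall U V, Op U -> Op V -> Ex Op U `|` Ex Op V = Ex Op (U `|` V).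
Proof.
move=> FA U V OU OV; have [W OW eqW] := FA _ _ OU OV.
suff -> : U `|` V = W by [].
apply/seteqP; split => x.
  by case=> [/(Ex_Some OU) | /(Ex_Some OV)] h; apply/(Ex_Some OW);
    rewrite -eqW; [left | right].
move/(Ex_Some OW); rewrite -eqW.
by case=> [/(Ex_Some OU) | /(Ex_Some OV)]; [left | right].
Qed.

Lemma Ex_setT : Ex Op setT None.
Proof. by apply/Ex_None; exists set0; [exact: Kc0 | rewrite setCT]. Qed.

Lemma Ex_None_compact {A : set X} : gts_closed Op A -> Ex Op (~` A) None ->
  top_compact Op A.
Proof.
by move=> cA /Ex_None [C KC]; rewrite setCK => sAC; case: (Kc_closed_sub KC cA sAC).
Qed.

Hypotheses (hwn : weakly_normal Op) (hlc : locally_compact Op).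

Lemma top_compact_open_nbhd {C : set X} : top_compact Op C ->
  exists O K, [/\ Op O, top_compact Op K, C `<=` O & O `<=` K].
Proof.
move=> cC.
pose G := [set O | Op O /\ exists K, top_compact Op K /\ O `<=` K].
have GU : forall A B, G A -> G B -> G (A `|` B).
  move=> A B [OA [KA [cA sA]]] [OB [KB [cB sB]]]; split; first exact: OpU.
  exists (KA `|` KB); split; first exact: top_compactU.
  by move=> y [/sA|/sB]; [left | right].
have G0 : G set0 by split => //; exists set0; split => //; exact: top_compact0.
have covC : C `<=` \bigcup_(O in G) O.
  move=> x _; have [K cK [U gU [Ux UK]]] := hlc x.
  have [O [OO Ox OU]] := gen_open_basis OpT OpI gU Ux.
  by exists O => //; split => //; exists K; split => // y /OU /UK.
have [H [fH sH] cvH] := cC G (fun O h => gen_open_sub h.1) covC.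
have [OH [K [cK HK]]] := bigcup_finite_closed G0 GU fH sH.
by exists (\bigcup_(U in H) U), K.
Qed.

Lemma Kc_open_nbhd {C : set X} : Kc Op C ->
  exists O K, [/\ Op O, Kc Op K, C `<=` O & O `<=` K].
Proof.
move=> [cC kC]; have [O0 [K0 [OO0 cK0 CO0 O0K0]]] := top_compact_open_nbhd kC.
have cO0 : gts_closed Op (~` O0) by rewrite /gts_closed setCK.
have dj : C `&` ~` O0 = set0.
  by apply/seteqP; split => x // [/CO0].
have [U [V [OU OV CU nV UV]]] := hwn _ _ (or_intror cC) (or_intror cO0) dj.
have VO0 : ~` V `<=` O0 by move=> x nVx; apply/not_notP => /nV.
exists U, (~` V); split => //.
- split; first by rewrite /gts_closed setCK.
  apply: top_compact_closed_sub cK0 (subset_trans VO0 O0K0) _.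
  by rewrite setCK; exact: gen_open_sub.
- by move=> x Ux Vx; have : (U `&` V) x by []; rewrite UV.
Qed.

Lemma Ex_setU_sup (hR : forall A B, gts_closed Op A -> gts_closed Op B ->
    A `&` B = set0 -> top_compact Op A \/ top_compact Op B) U V :
  Op U -> Op V -> Ex Op (U `|` V) `<=` Ex Op U `|` Ex Op V.
Proof.
move=> OU OV [x|].
  by move/(Ex_Some (OpU _ _ OU OV)) => [Ux|Vx];
    [left; apply/(Ex_Some OU) | right; apply/(Ex_Some OV)].
move/Ex_None => [C KC sC].
have [O [K [OO KK CO OK]]] := Kc_open_nbhd KC.
have cl Y : Op Y -> gts_closed Op (~` Y `\` O).
  by move=> OY; rewrite /gts_closed setCI !setCK; apply: OpU.
have dj : (~` U `\` O) `&` (~` V `\` O) = set0.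
  apply/seteqP; split => x // [[nU nO] [nV _]].
  by apply: nO; apply: CO; apply: sC => -[].
have Ex_out Y : Op Y -> top_compact Op (~` Y `\` O) -> Ex Op Y None.
  move=> OY cY; apply/Ex_None; exists ((~` Y `\` O) `|` K).
    by apply: KcU => //; split => //; apply: cl.
  by move=> y nYy; have [/OK|] := pselect (O y); [right | left].
by case: (hR _ _ (cl _ OU) (cl _ OV) dj) => cY; [left | right]; apply: Ex_out.
Qed.

End AlexandroffCompactification.

Arguments Ex_finitely_additive_setU {X Op} FA {U V}.

Theorem proposition7p12 (X : Type) (Op : set (set X)) (Cov : set (set (set X)))
  (hgts : is_gts Op Cov) (hwn : weakly_normal Op)
  (hlc : locally_compact Op) (hnc : ~ top_compact Op setT) :
  Ex_finitely_additive Op <->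
  (forall A B : set X, gts_closed Op A -> gts_closed Op B -> A `&` B = set0 ->
     top_compact Op A \/ top_compact Op B).
Proof.
case: hgts => Op0 OpT OpU OpI _.
split=> [FA A B cA cB AB | hR U V OU OV].
- have EAB := Ex_finitely_additive_setU FA cA cB.
  have : Ex Op (~` A `|` ~` B) None by rewrite -setCI AB setC0; exact: Ex_setT.
  rewrite -EAB => -[EA | EB]; [left | right]; exact: Ex_None_compact.
- exists (U `|` V); first exact: OpU.
  apply/seteqP; split; first exact: Ex_setU_sub.
  exact: Ex_setU_sup.
Qed.
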